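(* (1) Let $(\mathcal T,(N_B,R_B),(N_A,R_A),\mathbb D,\zeta)$ be an object of $\overline{\mathrm{RArr}}(\mathcal B,\mathcal A)$, i.e. $\mathbb D=(D,\Delta,\varepsilon)$ is a comonad on $\mathcal B$ and $(R_B,\zeta)$ is a comonad arrow from $\mathbb D$ to $N_AR_A$ such that $\bar\zeta:=(\epsilon^BN_AR_AN_B)\circ(N_B\zeta N_B)\circ(N_BD\eta^B):N_BD\to N_AR_AN_B$ is invertible. Then $(\mathcal T,(N_A,R_A),(N_B,R_B),\tau)$ is a pre-torsor, where $\tau=(R_AN_BR_B\bar\zeta)\circ(R_AN_B\eta^BD)\circ(R_A\bar\zeta^{-1})\circ(\eta^AR_AN_B)$. (2) If $(F,t)$ is a morphism in $\overline{\mathrm{RArr}}(\mathcal B,\mathcal A)$ between two such objects, then $F$ is a morphism between the corresponding pre-torsors of (1).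
   Context: Conventions: $\circ$ vertical composition, juxtaposition horizontal composition; a functor's name denotes its identity transformation. Adjunctions $(N_A:\mathcal A\to\mathcal T,R_A)$, $(N_B:\mathcal B\to\mathcal T,R_B)$ with units $\eta^A,\eta^B$, counits $\epsilon^A,\epsilon^B$; $N_AR_A$ is a comonad with comultiplication $N_A\eta^AR_A$ and counit $\epsilon^A$. A comonad arrow $(R_B,\zeta)$ from $\mathbb D$ to $N_AR_A$ means $\zeta:DR_B\to R_BN_AR_A$ with $(R_B\epsilon^A)\circ\zeta=\varepsilon R_B$, $(R_BN_A\eta^AR_A)\circ\zeta=(\zeta N_AR_A)\circ(D\zeta)\circ(\Delta R_B)$. Pre-torsor: $\tau:R_AN_B\to R_AN_BR_BN_AR_AN_B$ with $(R_AN_BR_B\epsilon^AN_B)\circ\tau=R_AN_B\eta^B$, $(R_A\epsilon^BN_AR_AN_B)\circ\tau=\eta^AR_AN_B$, $(R_AN_BR_BN_A\tau)\circ\tau=(\tau R_BN_AR_AN_B)\circ\tau$. For $F:\mathcal T'\to\mathcal T$ with $R_AF=R'_A$, $R_BF=R'_B$ put $a=(\epsilon^AFN'_A)\circ(N_A\eta'^A)$, $b=(\epsilon^BFN'_B)\circ(N_B\eta'^B)$. A pre-torsor morphism is such $F$ with $(R_AbR_BaR_Ab)\circ\tau=\tau'\circ(R_Ab)$. A morphism in $\overline{\mathrm{RArr}}(\mathcal B,\mathcal A)$ is $(F,t)$ with $F$ such a functor and $t:\mathbb D\to\mathbb D'$ a comonad morphism with $(R_BaR'_A)\circ(\zeta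 F)=\zeta'\circ(tR'_B)$. *)

Set Implicit Arguments.
Unset Strict Implicit.

Record Category := {
  Obj :> Type;
  Hom : Obj -> Obj -> Type;
  idm : forall a, Hom a a;
  cmp : forall a b c, Hom b c -> Hom a b -> Hom a c;
  cmp_id_l : forall a b (f : Hom a b), cmp (idm b) f = f;
  cmp_id_r : forall a b (f : Hom a b), cmp f (idm a) = f;
  cmp_assoc : forall a b c d (h : Hom c d) (g : Hom b c) (f : Hom a b),
      cmp h (cmp g f) = cmp (cmp h g) f }.
Arguments Hom {c0} _ _.
Arguments idm {c0} a.
Arguments cmp {c0 a b c} _ _.
Infix "⊚" := cmp (at level 40, left associativity).

Record Functor (C D : Category) := {
  fobj :> Obj C -> Obj D;
  fmap : forall a b, Hom a b -> Hom (fobj a) (fobj b);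
  fmap_id : forall a, fmap (idm a) = idm (fobj a);
  fmap_cmp : forall a b c (g : Hom b c) (f : Hom a b),
      fmap (g ⊚ f) = fmap g ⊚ fmap f }.
Arguments fmap {C D} f0 {a b} _.

Program Definition Fid (C : Category) : Functor C C :=
  {| fobj := fun x => x; fmap := fun a b f => f |}.
Next Obligation. reflexivity. Qed.
Next Obligation. reflexivity. Qed.

Program Definition Fcomp (C D E : Category) (G : Functor D E) (F : Functor C D)
  : Functor C E :=
  {| fobj := fun x => G (F x); fmap := fun a b f => fmap G (fmap F f) |}.
Next Obligation. destruct G, F; simpl in *; intros; now rewrite fmap_id1, fmap_id0. Qed.
Next Obligation. destruct G, F; simpl in *; intros; now rewrite fmap_cmp1, fmap_cmp0. Qed.
Infix "○" := Fcomp (at level 45, right associativity).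

(* A transformation between (object parts of) functors F, G : C -> D is a
   family of components; naturality is the separate predicate [natural].
   Horizontal/whiskered composites are the usual componentwise formulas;
   functor composition is strictly associative on objects, so these types
   match up to conversion. *)
Definition Trans {C D : Category} (F G : Obj C -> Obj D) :=
  forall x, Hom (F x) (G x).

Definition natural {C D : Category} (F G : Functor C D) (α : Trans F G) : Prop :=
  forall a b (f : Hom a b), fmap G f ⊚ α a = α b ⊚ fmap F f.
Arguments natural {C D} F G α.

Definition teq {C D : Category} {F G : Obj C -> Obj D} (α β : Trans F G) : Prop :=
  forall x, α x = β x.
Infix "≡" := teq (at level 70).

Definition idt {C D : Category} (F : Obj C -> Obj D) : Trans F F :=
  fun x => idm (F x).

Definition vc {C D : Category} {F G H : Obj C -> Obj D}
  (β : Trans G H) (α : Trans F G) : Trans F H := fun x => β x ⊚ α x.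

Definition wl {C D E : Category} (G : Functor D E) {F F' : Obj C -> Obj D}
  (α : Trans F F') : Trans (fun x => G (F x)) (fun x => G (F' x)) :=
  fun x => fmap G (α x).

Definition wr {B C D : Category} {F F' : Obj C -> Obj D} (α : Trans F F')
  (H : Obj B -> Obj C) : Trans (fun x => F (H x)) (fun x => F' (H x)) :=
  fun x => α (H x).

Definition hc {C D E : Category} {G : Functor D E} {G' : Obj D -> Obj E}
  {F F' : Obj C -> Obj D} (β : Trans G G') (α : Trans F F')
  : Trans (fun x => G (F x)) (fun x => G' (F' x)) :=
  fun x => β (F' x) ⊚ fmap G (α x).

Record Adjunction {C D : Category} (N : Functor C D) (R : Functor D C) := {
  unit : Trans (Fid C) (R ○ N);
  counit : Trans (N ○ R) (Fid D);
  unit_nat : natural (Fid C) (R ○ N) unit;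
  counit_nat : natural (N ○ R) (Fid D) counit;
  triangle_N : forall c, counit (N c) ⊚ fmap N (unit c) = idm (N c);
  triangle_R : forall d, fmap R (counit d) ⊚ unit (R d) = idm (R d) }.
Arguments unit {C D N R} a x.
Arguments counit {C D N R} a x.

Record Comonad (C : Category) := {
  cD : Functor C C;
  cDelta : Trans cD (cD ○ cD);
  cEps : Trans cD (Fid C);
  cDelta_nat : natural cD (cD ○ cD) cDelta;
  cEps_nat : natural cD (Fid C) cEps;
  counit_left : vc (wr cEps cD) cDelta ≡ idt cD;
  counit_right : vc (wl cD cEps) cDelta ≡ idt cD;
  coassoc : vc (wr cDelta cD) cDelta ≡ vc (wl cD cDelta) cDelta }.
Arguments cD {C} c.
Arguments cDelta {C} c x.
Arguments cEps {C} c x.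

Definition ComonadMorphism {C : Category} (M M' : Comonad C)
  (t : Trans (cD M) (cD M')) : Prop :=
  natural (cD M) (cD M') t /\
  vc (cEps M') t ≡ cEps M /\
  vc (cDelta M') t ≡ vc (hc t t) (cDelta M).
Arguments ComonadMorphism {C} M M' t.

Definition zetabar {B A T : Category} {NB : Functor B T} {RB : Functor T B}
  {NA : Functor A T} {RA : Functor T A} (adjB : Adjunction NB RB)
  (M : Comonad B) (zeta : Trans (cD M ○ RB) (RB ○ NA ○ RA))
  : Trans (NB ○ cD M) (NA ○ RA ○ NB) :=
  vc (wr (counit adjB) (NA ○ RA ○ NB))
     (vc (wl NB (wr zeta NB)) (wl NB (wl (cD M) (unit adjB)))).

Record RArrObj (B A T : Category) (NB : Functor B T) (RB : Functor T B)
    (NA : Functor A T) (RA : Functor T A) := {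
  adjB : Adjunction NB RB;
  adjA : Adjunction NA RA;
  cmd : Comonad B;
  zeta : Trans (cD cmd ○ RB) (RB ○ NA ○ RA);
  zeta_nat : natural (cD cmd ○ RB) (RB ○ NA ○ RA) zeta;
  arrow_counit : vc (wl RB (counit adjA)) zeta ≡ wr (cEps cmd) RB;
  arrow_comult :
    vc (wl RB (wr (wl NA (unit adjA)) RA)) zeta
    ≡ vc (wr zeta (NA ○ RA)) (vc (wl (cD cmd) zeta) (wr (cDelta cmd) RB));
  zetainv : Trans (NA ○ RA ○ NB) (NB ○ cD cmd);
  zetainv_l : vc zetainv (zetabar adjB zeta) ≡ idt (NB ○ cD cmd);
  zetainv_r : vc (zetabar adjB zeta) zetainv ≡ idt (NA ○ RA ○ NB) }.
Arguments adjB {B A T NB RB NA RA} r.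
Arguments adjA {B A T NB RB NA RA} r.
Arguments cmd {B A T NB RB NA RA} r.
Arguments zeta {B A T NB RB NA RA} r x.
Arguments zetainv {B A T NB RB NA RA} r x.

Definition tau {B A T : Category} {NB : Functor B T} {RB : Functor T B}
  {NA : Functor A T} {RA : Functor T A} (X : RArrObj NB RB NA RA)
  : Trans (RA ○ NB) (RA ○ NB ○ RB ○ NA ○ RA ○ NB) :=
  vc (wl RA (wl NB (wl RB (zetabar (adjB X) (zeta X)))))
    (vc (wl RA (wl NB (wr (unit (adjB X)) (cD (cmd X)))))
      (vc (wl RA (zetainv X))
          (wr (unit (adjA X)) (RA ○ NB)))).

Definition IsPreTorsor {A B T : Category} {NA : Functor A T} {RA : Functor T A}
  {NB : Functor B T} {RB : Functor T B}
  (adjA : Adjunction NA RA) (adjB : Adjunction NB RB)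
  (τ : Trans (RA ○ NB) (RA ○ NB ○ RB ○ NA ○ RA ○ NB)) : Prop :=
  natural (RA ○ NB) (RA ○ NB ○ RB ○ NA ○ RA ○ NB) τ /\
  vc (wl RA (wl NB (wl RB (wr (counit adjA) NB)))) τ ≡ wl RA (wl NB (unit adjB)) /\
  vc (wl RA (wr (counit adjB) (NA ○ RA ○ NB))) τ ≡ wr (unit adjA) (RA ○ NB) /\
  vc (wl RA (wl NB (wl RB (wl NA τ)))) τ ≡ vc (wr τ (RB ○ NA ○ RA ○ NB)) τ.
Arguments IsPreTorsor {A B T NA RA NB RB} adjA adjB τ.

Definition cmpa {A T T' : Category} {NA : Functor A T} {RA : Functor T A}
  {NA' : Functor A T'} (F : Functor T' T)
  (adjA : Adjunction NA RA) (adjA' : Adjunction NA' (RA ○ F))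
  : Trans NA (F ○ NA') :=
  vc (wr (counit adjA) (F ○ NA')) (wl NA (unit adjA')).
Arguments cmpa {A T T' NA RA NA'} F adjA adjA'.

(* Morphism of pre-torsors: F : T' -> T with R_A F = R'_A, R_B F = R'_B
   (built in by taking R'_A := R_A ○ F, R'_B := R_B ○ F), such that
   (R_A b R_B a R_A b) ∘ τ = τ' ∘ (R_A b). *)
Definition IsPreTorsorMorphism {A B T T' : Category}
  {NA : Functor A T} {RA : Functor T A} {NB : Functor B T} {RB : Functor T B}
  {NA' : Functor A T'} {NB' : Functor B T'} (F : Functor T' T)
  (adjA : Adjunction NA RA) (adjB : Adjunction NB RB)
  (τ : Trans (RA ○ NB) (RA ○ NB ○ RB ○ NA ○ RA ○ NB))
  (adjA' : Adjunction NA' (RA ○ F)) (adjB' : Adjunction NB' (RB ○ F))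
  (τ' : Trans ((RA ○ F) ○ NB')
              ((RA ○ F) ○ NB' ○ (RB ○ F) ○ NA' ○ (RA ○ F) ○ NB')) : Prop :=
  let a := cmpa F adjA adjA' in
  let b := cmpa F adjB adjB' in
  vc (wl RA (hc b (wl RB (hc a (wl RA b))))) τ ≡ vc τ' (wl RA b).
Arguments IsPreTorsorMorphism {A B T T' NA RA NB RB NA' NB'} F adjA adjB τ adjA' adjB' τ'.

Definition IsRArrMorphism {B A T T' : Category}
  {NB : Functor B T} {RB : Functor T B} {NA : Functor A T} {RA : Functor T A}
  {NB' : Functor B T'} {NA' : Functor A T'} (F : Functor T' T)
  (X : RArrObj NB RB NA RA) (Y : RArrObj NB' (RB ○ F) NA' (RA ○ F))
  (t : Trans (cD (cmd X)) (cD (cmd Y))) : Prop :=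
  ComonadMorphism (cmd X) (cmd Y) t /\
  vc (wl RB (wr (cmpa F (adjA X) (adjA Y)) (RA ○ F))) (wr (zeta X) F)
  ≡ vc (zeta Y) (wr t (RB ○ F)).
Arguments IsRArrMorphism {B A T T' NB RB NA RA NB' NA'} F X Y t.

(* Fix an object X and write ζ^ := (ζ N_B) ∘ (D η^B) : D -> R_B N_A R_A N_B.
   Then ζ̄ is the N_B ⊣ R_B adjunct of ζ^, and τ is the N_A ⊣ R_A adjunct of
   γ := (N_B ζ^) ∘ ζ̄^{-1} : N_A R_A N_B -> N_B R_B N_A R_A N_B.
   Since transposition along an adjunction is bijective, every pre-torsor
   axiom for τ reduces to an identity about ζ^ and γ:
   - the two counit axioms follow from ζ̄ ζ̄^{-1} = 1 and from the counit
     axiom of the comonad arrow, (R_B ε^A N_B) ∘ ζ^ = η^B ∘ ε;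
   - coassociativity follows from the comultiplication axiom of the arrow,
     in the form (R_B N_A τ) ∘ ζ^ = (ζ^ R_B N_A R_A N_B) ∘ (D ζ^) ∘ Δ.
   For a morphism (F, t) : X -> Y let c := (a R_A F N'_B) ∘ (N_A R_A b).
   The compatibility of (F, t) with ζ, ζ' gives (R_B c) ∘ ζ^ = ζ'^ ∘ t, hence
   c ∘ ζ̄ = (F ζ̄') ∘ (b D') ∘ (N_B t), and the morphism equation for τ, τ'
   follows by transposing along N_A ⊣ R_A. *)
From Stdlib Require Import ssreflect.

(* Rewrite with an equation after unfolding functor composites on both sides;
   needed because whiskered components are only convertibly of matching type. *)
Ltac rewrite_cbn L :=
  let H := fresh "H" in have H := L; cbn in H; cbn; rewrite H; clear H.

(* Reassociate composites to the right.  Plain [rewrite] is used because,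
   unlike the ssreflect one, it does not unfold local definitions such as
   composite components while matching. *)
Ltac assoc_right := repeat rewrite <- cmp_assoc.

Lemma cmp_eq_ctx {C : Category} {b c d : C} {f : Hom c d} {g : Hom b c} {h : Hom b d} :
  f ⊚ g = h -> forall (a : C) (w : Hom a b), f ⊚ (g ⊚ w) = h ⊚ w.
Proof. move=> E a w. by rewrite cmp_assoc E. Qed.

Lemma fmap_cmp_ctx {C D : Category} (F : Functor C D) {a b c : C} {e : D}
  (g : Hom b c) (f : Hom a b) (w : Hom e (F a)) :
  fmap F g ⊚ (fmap F f ⊚ w) = fmap F (g ⊚ f) ⊚ w.
Proof. by rewrite fmap_cmp cmp_assoc. Qed.

Lemma cancel_inner {C : Category} {a c d e : C} (p : Hom c e) (i : Hom d c)
  (z : Hom c d) (w : Hom a c) : i ⊚ z = idm c -> (p ⊚ i) ⊚ (z ⊚ w) = p ⊚ w.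
Proof. move=> E. by rewrite -cmp_assoc (cmp_assoc i) E cmp_id_l. Qed.

(* If z1, z2 are invertible (on the relevant sides) and m ∘ z1 = z2 ∘ n,
   then the inverses satisfy the mirrored square; this transports
   naturality from ζ̄ to ζ̄^{-1}. *)
Lemma inverse_square {C : Category} {a b c d : C} (z1 : Hom a b) (i1 : Hom b a)
  (z2 : Hom c d) (i2 : Hom d c) (m : Hom b d) (n : Hom a c) :
  z1 ⊚ i1 = idm b -> i2 ⊚ z2 = idm c -> m ⊚ z1 = z2 ⊚ n -> n ⊚ i1 = i2 ⊚ m.
Proof.
  move=> E1 E2 E3.
  rewrite -(cmp_id_l n) -E2 -(cmp_assoc i2) -E3 -!cmp_assoc E1. by rewrite cmp_id_r.
Qed.

Section AdjunctionFacts.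
Context {C D : Category} {N : Functor C D} {R : Functor D C} (ad : Adjunction N R).

Lemma unit_comm {a b} (f : Hom a b) : fmap R (fmap N f) ⊚ unit ad a = unit ad b ⊚ f.
Proof. exact (unit_nat ad f). Qed.

Lemma counit_comm {a b} (f : Hom a b) : f ⊚ counit ad a = counit ad b ⊚ fmap N (fmap R f).
Proof. exact (counit_nat ad f). Qed.

Lemma adjunct_of_adjunct_l {c d} (f : Hom (N c) d) :
  counit ad d ⊚ fmap N (fmap R f ⊚ unit ad c) = f.
Proof. rewrite fmap_cmp cmp_assoc -counit_comm -cmp_assoc triangle_N. apply: cmp_id_r. Qed.

Lemma adjunct_of_adjunct_r {c d} (u : Hom c (R d)) :
  fmap R (counit ad d ⊚ fmap N u) ⊚ unit ad c = u.
Proof. rewrite fmap_cmp -cmp_assoc unit_comm cmp_assoc triangle_R. apply: cmp_id_l. Qed.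

Lemma adjunct_inj_l c d (f f' : Hom (N c) d) :
  fmap R f ⊚ unit ad c = fmap R f' ⊚ unit ad c -> f = f'.
Proof. move=> E. by rewrite -(adjunct_of_adjunct_l f) -(adjunct_of_adjunct_l f') E. Qed.

Lemma adjunct_inj_r c d (u u' : Hom c (R d)) :
  counit ad d ⊚ fmap N u = counit ad d ⊚ fmap N u' -> u = u'.
Proof. move=> E. by rewrite -(adjunct_of_adjunct_r u) -(adjunct_of_adjunct_r u') E. Qed.

End AdjunctionFacts.

Section PreTorsorOfObject.
Context {B A T : Category} {NB : Functor B T} {RB : Functor T B}
  {NA : Functor A T} {RA : Functor T A} (X : RArrObj NB RB NA RA).
Local Notation D := (cD (cmd X)).
Local Notation aB := (adjB X).
Local Notation aA := (adjA X).
Local Notation zinv := (zetainv X).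
Local Notation zbar b := (zetabar (adjB X) (zeta X) b : Hom (NB (D b)) (NA (RA (NB b)))).

Definition zeta_hat (b : B) : Hom (D b) (RB (NA (RA (NB b)))) :=
  zeta X (NB b) ⊚ fmap D (unit aB b).

Definition gamma (b : B) : Hom (NA (RA (NB b))) (NB (RB (NA (RA (NB b))))) :=
  fmap NB (zeta_hat b) ⊚ zinv b.

Lemma zeta_hat_def b : zeta_hat b = zeta X (NB b) ⊚ fmap D (unit aB b).
Proof. by []. Qed.

Lemma gamma_def b : gamma b = fmap NB (zeta_hat b) ⊚ zinv b.
Proof. by []. Qed.

Lemma zetabar_as_adjunct b : zbar b = counit aB (NA (RA (NB b))) ⊚ fmap NB (zeta_hat b).
Proof. rewrite /zetabar /zeta_hat /vc /wr /wl /=. by rewrite fmap_cmp. Qed.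

Lemma zeta_hat_as_adjunct b : fmap RB (zbar b) ⊚ unit aB (D b) = zeta_hat b.
Proof. by rewrite zetabar_as_adjunct adjunct_of_adjunct_r. Qed.

Lemma zetainv_zetabar b : zinv b ⊚ zbar b = idm _.
Proof. exact (zetainv_l X b). Qed.

Lemma zetabar_zetainv b : zbar b ⊚ zinv b = idm _.
Proof. exact (zetainv_r X b). Qed.

Lemma tau_as_adjunct b : tau X b = fmap RA (gamma b) ⊚ unit aA (RA (NB b)).
Proof. rewrite /tau /gamma /vc /wr /wl /=. by rewrite !cmp_assoc -!fmap_cmp zeta_hat_as_adjunct. Qed.

Lemma gamma_as_adjunct b : counit aA _ ⊚ fmap NA (tau X b) = gamma b.
Proof. by rewrite tau_as_adjunct adjunct_of_adjunct_l. Qed.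

Lemma zeta_comm {x y : T} (f : Hom x y) :
  fmap RB (fmap NA (fmap RA f)) ⊚ zeta X x = zeta X y ⊚ fmap D (fmap RB f).
Proof. exact (zeta_nat X f). Qed.

Lemma delta_comm {x y : B} (f : Hom x y) :
  fmap D (fmap D f) ⊚ cDelta (cmd X) x = cDelta (cmd X) y ⊚ fmap D f.
Proof. exact (cDelta_nat (cmd X) f). Qed.

Lemma zeta_hat_comm b1 b2 (f : Hom b1 b2) :
  fmap RB (fmap NA (fmap RA (fmap NB f))) ⊚ zeta_hat b1 = zeta_hat b2 ⊚ fmap D f.
Proof.
  rewrite /zeta_hat cmp_assoc zeta_comm -!cmp_assoc -!fmap_cmp. by rewrite unit_comm.
Qed.

Lemma zetabar_comm b1 b2 (f : Hom b1 b2) :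
  fmap NA (fmap RA (fmap NB f)) ⊚ zbar b1 = zbar b2 ⊚ fmap NB (fmap D f).
Proof.
  rewrite !zetabar_as_adjunct cmp_assoc counit_comm -cmp_assoc -(fmap_cmp NB) zeta_hat_comm.
  by rewrite fmap_cmp cmp_assoc.
Qed.

Lemma zetainv_comm b1 b2 (f : Hom b1 b2) :
  fmap NB (fmap D f) ⊚ zinv b1 = zinv b2 ⊚ fmap NA (fmap RA (fmap NB f)).
Proof. apply: inverse_square; [exact: zetabar_zetainv | exact: zetainv_zetabar | exact: zetabar_comm]. Qed.

Lemma gamma_comm b1 b2 (f : Hom b1 b2) :
  fmap NB (fmap RB (fmap NA (fmap RA (fmap NB f)))) ⊚ gamma b1
  = gamma b2 ⊚ fmap NA (fmap RA (fmap NB f)).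
Proof. rewrite /gamma cmp_assoc -fmap_cmp zeta_hat_comm fmap_cmp -!cmp_assoc. by rewrite zetainv_comm. Qed.

Lemma tau_natural : natural (RA ○ NB) (RA ○ NB ○ RB ○ NA ○ RA ○ NB) (tau X).
Proof.
  move=> b1 b2 f /=. rewrite !tau_as_adjunct cmp_assoc -fmap_cmp gamma_comm fmap_cmp.
  by rewrite -!cmp_assoc unit_comm.
Qed.

Lemma tau_counit_B b : fmap RA (counit aB (NA (RA (NB b)))) ⊚ tau X b = unit aA (RA (NB b)).
Proof.
  rewrite tau_as_adjunct cmp_assoc -fmap_cmp /gamma cmp_assoc -zetabar_as_adjunct.
  rewrite zetabar_zetainv fmap_id. apply: cmp_id_l.
Qed.

Lemma zeta_hat_counit b : fmap RB (counit aA (NB b)) ⊚ zeta_hat b = unit aB b ⊚ cEps (cmd X) b.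
Proof.
  have E := arrow_counit X (NB b). rewrite /vc /wl /wr /= in E.
  rewrite /zeta_hat cmp_assoc E. symmetry. exact (cEps_nat (cmd X) (unit aB b)).
Qed.

Lemma zetabar_counit b : counit aA (NB b) ⊚ zbar b = fmap NB (cEps (cmd X) b).
Proof.
  rewrite zetabar_as_adjunct cmp_assoc counit_comm -cmp_assoc -(fmap_cmp NB) zeta_hat_counit.
  rewrite (fmap_cmp NB) cmp_assoc triangle_N. apply: cmp_id_l.
Qed.

Lemma tau_counit_A b :
  fmap RA (fmap NB (fmap RB (counit aA (NB b)))) ⊚ tau X b = fmap RA (fmap NB (unit aB b)).
Proof.
  rewrite tau_as_adjunct cmp_assoc -fmap_cmp /gamma cmp_assoc -(fmap_cmp NB).
  rewrite zeta_hat_counit (fmap_cmp NB) -zetabar_counit.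
  rewrite -(cmp_assoc (fmap NB (unit aB b))) -(cmp_assoc (counit aA (NB b))).
  rewrite zetabar_zetainv cmp_id_r fmap_cmp -cmp_assoc triangle_R. apply: cmp_id_r.
Qed.

Lemma gamma_zeta_hat b :
  fmap RB (gamma b) ⊚ zeta_hat b = unit aB (RB (NA (RA (NB b)))) ⊚ zeta_hat b.
Proof.
  rewrite -{1}zeta_hat_as_adjunct cmp_assoc -(fmap_cmp RB) gamma_def -cmp_assoc.
  rewrite zetainv_zetabar cmp_id_r. exact: unit_comm.
Qed.

Lemma tau_zeta_hat b : fmap RB (fmap NA (tau X b)) ⊚ zeta_hat b
  = zeta_hat (RB (NA (RA (NB b)))) ⊚ (fmap D (zeta_hat b) ⊚ cDelta (cmd X) b).
Proof.
  have E := arrow_comult X (NB b). rewrite /vc /wl /wr /= in E.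
  rewrite tau_as_adjunct (fmap_cmp NA) (fmap_cmp RB) {1}zeta_hat_def -cmp_assoc (cmp_eq_ctx E).
  rewrite -!cmp_assoc (cmp_eq_ctx (zeta_comm _)) -!cmp_assoc -(delta_comm (unit aB b)).
  rewrite !(fmap_cmp_ctx D) -(cmp_assoc (fmap RB (gamma b))) gamma_zeta_hat !zeta_hat_def.
  reflexivity.
Qed.

Lemma NA_tau b : fmap NA (tau X b)
  = zbar (RB (NA (RA (NB b)))) ⊚ (fmap NB (fmap D (zeta_hat b) ⊚ cDelta (cmd X) b) ⊚ zinv b).
Proof.
  have tau_zetabar : fmap NA (tau X b) ⊚ zbar b
      = zbar (RB (NA (RA (NB b)))) ⊚ fmap NB (fmap D (zeta_hat b) ⊚ cDelta (cmd X) b).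
  { apply: (adjunct_inj_l aB).
    rewrite (fmap_cmp RB) -(cmp_assoc (fmap RB (fmap NA _))). cbn.
    rewrite zeta_hat_as_adjunct tau_zeta_hat (fmap_cmp RB) -cmp_assoc unit_comm.
    by rewrite [RHS]cmp_assoc zeta_hat_as_adjunct. }
  transitivity (fmap NA (tau X b) ⊚ (zbar b ⊚ zinv b)).
  - by rewrite zetabar_zetainv cmp_id_r.
  - rewrite [LHS]cmp_assoc. rewrite_cbn tau_zetabar. by rewrite -cmp_assoc.
Qed.

Lemma tau_coassoc b : fmap RA (fmap NB (fmap RB (fmap NA (tau X b)))) ⊚ tau X b
  = tau X (RB (NA (RA (NB b)))) ⊚ tau X b.
Proof.
  apply: (adjunct_inj_r aA). cbn.
  rewrite (fmap_cmp NA) [LHS]cmp_assoc -counit_comm -cmp_assoc. rewrite_cbn (gamma_as_adjunct b).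
  rewrite (fmap_cmp NA) [RHS]cmp_assoc. rewrite_cbn (gamma_as_adjunct (RB (NA (RA (NB b))))).
  rewrite !gamma_def. have E := NA_tau b. cbn in E. rewrite [in RHS]E.
  rewrite (cancel_inner _ _ _ _ (zetainv_zetabar _)) !(fmap_cmp_ctx NB).
  rewrite_cbn (tau_zeta_hat b). reflexivity.
Qed.

Lemma tau_is_pre_torsor : IsPreTorsor (adjA X) (adjB X) (tau X).
Proof.
  split; [exact: tau_natural | split; [|split]] => b.
  - exact: tau_counit_A.
  - exact: tau_counit_B.
  - exact: tau_coassoc.
Qed.

End PreTorsorOfObject.

Section PreTorsorMorphism.
Context {B A T T' : Category} {NB : Functor B T} {RB : Functor T B}
  {NA : Functor A T} {RA : Functor T A} {NB' : Functor B T'} {NA' : Functor A T'}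
  (F : Functor T' T) (X : RArrObj NB RB NA RA) (Y : RArrObj NB' (RB ○ F) NA' (RA ○ F))
  (t : Trans (cD (cmd X)) (cD (cmd Y))) (Ht : IsRArrMorphism F X Y t).
Local Notation D := (cD (cmd X)).
Local Notation D' := (cD (cmd Y)).
Local Notation aB := (adjB X).
Local Notation aA := (adjA X).
Local Notation aB' := (adjB Y).
Local Notation aA' := (adjA Y).

(* Components of the comparison transformations a : N_A -> F N'_A and
   b : N_B -> F N'_B (convertible to [cmpa]). *)
Definition acomp (y : A) : Hom (NA y) (F (NA' y)) :=
  counit aA (F (NA' y)) ⊚ fmap NA (unit aA' y).
Definition bcomp (y : B) : Hom (NB y) (F (NB' y)) :=
  counit aB (F (NB' y)) ⊚ fmap NB (unit aB' y).

Definition ccomp (x : B) : Hom (NA (RA (NB x))) (F (NA' (RA (F (NB' x))))) :=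
  acomp (RA (F (NB' x))) ⊚ fmap NA (fmap RA (bcomp x)).

Lemma bcomp_unit y : fmap RB (bcomp y) ⊚ unit aB y = unit aB' y.
Proof. exact: adjunct_of_adjunct_r. Qed.

Lemma bcomp_comm {y1 y2} (f : Hom y1 y2) : fmap F (fmap NB' f) ⊚ bcomp y1 = bcomp y2 ⊚ fmap NB f.
Proof.
  rewrite /bcomp cmp_assoc counit_comm -cmp_assoc -(fmap_cmp NB).
  have E := unit_comm aB' f. cbn in E. by rewrite E fmap_cmp cmp_assoc.
Qed.

Lemma acomp_adjunct {w : T'} {v : A} (h : Hom (NA' v) w) :
  counit aA (F w) ⊚ fmap NA (fmap RA (fmap F h) ⊚ unit aA' v) = fmap F h ⊚ acomp v.
Proof. rewrite fmap_cmp cmp_assoc -counit_comm /acomp. by rewrite -?cmp_assoc. Qed.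

Lemma t_comm {x y} (f : Hom x y) : fmap D' f ⊚ t x = t y ⊚ fmap D f.
Proof. case: Ht => [[Hnat _] _]. exact: Hnat. Qed.

Lemma t_zeta (x : T') : fmap RB (acomp (RA (F x))) ⊚ zeta X (F x) = zeta Y x ⊚ t (RB (F x)).
Proof. case: Ht => [_ E]. exact: E. Qed.

Lemma ccomp_zeta_hat x : fmap RB (ccomp x) ⊚ zeta_hat X x = zeta_hat Y x ⊚ t x.
Proof.
  rewrite /ccomp !zeta_hat_def (fmap_cmp RB) -!cmp_assoc.
  rewrite (cmp_eq_ctx (zeta_comm X (bcomp x))) -!cmp_assoc. rewrite_cbn (cmp_eq_ctx (t_zeta (NB' x))).
  rewrite -!cmp_assoc -(fmap_cmp D) bcomp_unit. rewrite_cbn (t_comm (unit aB' x)). reflexivity.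
Qed.

Lemma ccomp_zetabar x : ccomp x ⊚ zetabar aB (zeta X) x
  = fmap F (zetabar aB' (zeta Y) x) ⊚ (bcomp (D' x) ⊚ fmap NB (t x)).
Proof.
  apply: (adjunct_inj_l aB).
  rewrite (fmap_cmp RB) -cmp_assoc. rewrite_cbn (zeta_hat_as_adjunct X x).
  rewrite_cbn (ccomp_zeta_hat x). rewrite -> !(fmap_cmp RB). assoc_right. rewrite unit_comm.
  rewrite_cbn (cmp_eq_ctx (bcomp_unit (D' x))). rewrite_cbn (cmp_eq_ctx (zeta_hat_as_adjunct Y x)).
  reflexivity.
Qed.

Lemma ccomp_eq x : ccomp x
  = fmap F (zetabar aB' (zeta Y) x) ⊚ (bcomp (D' x) ⊚ (fmap NB (t x) ⊚ zetainv X x)).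
Proof.
  transitivity (ccomp x ⊚ (zetabar aB (zeta X) x ⊚ zetainv X x)).
  - have E := zetabar_zetainv X x. cbn in E. cbn. by rewrite E cmp_id_r.
  - rewrite -> cmp_assoc. rewrite_cbn (ccomp_zetabar x). by rewrite -?cmp_assoc.
Qed.

Lemma F_zetainv_zetabar x : fmap F (zetainv Y x) ⊚ fmap F (zetabar aB' (zeta Y) x) = idm _.
Proof. rewrite -fmap_cmp. have E := zetainv_zetabar Y x. cbn in E. cbn. rewrite E. apply: fmap_id. Qed.

Lemma tau_preserved x :
  fmap RA (bcomp (RB (F (NA' (RA (F (NB' x)))))) ⊚ fmap NB (fmap RB (ccomp x))) ⊚ tau X x
  = tau Y x ⊚ fmap RA (bcomp x).
Proof.
  apply: (adjunct_inj_r aA).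
  rewrite -> (fmap_cmp NA), cmp_assoc. rewrite -counit_comm. assoc_right.
  rewrite_cbn (gamma_as_adjunct X x).
  rewrite -> (fmap_cmp NA), cmp_assoc. rewrite_cbn (tau_as_adjunct Y x).
  rewrite_cbn (cmp_eq_ctx (acomp_adjunct (gamma Y x))). assoc_right.
  change (acomp (RA (F (NB' x))) ⊚ fmap NA (fmap RA (bcomp x))) with (ccomp x).
  rewrite [in RHS]ccomp_eq !gamma_def. rewrite -> (fmap_cmp F). cbn.
  rewrite (cancel_inner _ _ _ _ (F_zetainv_zetabar x)).
  rewrite_cbn (cmp_eq_ctx (bcomp_comm (zeta_hat Y x))). assoc_right.
  rewrite !(fmap_cmp_ctx NB). rewrite_cbn (ccomp_zeta_hat x). reflexivity.
Qed.

Lemma F_is_pre_torsor_morphism :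
  IsPreTorsorMorphism F (adjA X) (adjB X) (tau X) (adjA Y) (adjB Y) (tau Y).
Proof. rewrite /IsPreTorsorMorphism => x. exact: tau_preserved. Qed.

End PreTorsorMorphism.

Theorem mainTheorem8 :
  (* (1) every object of RArr-bar(B, A) yields a pre-torsor *)
  (forall (B A T : Category) (NB : Functor B T) (RB : Functor T B)
          (NA : Functor A T) (RA : Functor T A) (X : RArrObj NB RB NA RA),
      IsPreTorsor (adjA X) (adjB X) (tau X)) /\
  (* (2) morphisms of RArr-bar(B, A) yield morphisms of pre-torsors *)
  (forall (B A T T' : Category) (NB : Functor B T) (RB : Functor T B)
          (NA : Functor A T) (RA : Functor T A)
          (NB' : Functor B T') (NA' : Functor A T') (F : Functor T' T)
          (X : RArrObj NB RB NA RA) (Y : RArrObj NB' (RB ○ F) NA' (RA ○ F))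
          (t : Trans (cD (cmd X)) (cD (cmd Y))),
      IsRArrMorphism F X Y t ->
      IsPreTorsorMorphism F (adjA X) (adjB X) (tau X) (adjA Y) (adjB Y) (tau Y)).
Proof.
  split.
  - move=> B A T NB RB NA RA X. exact: tau_is_pre_torsor.
  - move=> B A T T' NB RB NA RA NB' NA' F X Y t Ht.
    exact: F_is_pre_torsor_morphism Ht.
Qed.
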